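(* Let $A$ be an associative algebra and $M$ an $A$-bimodule. A collection $\{ T_\alpha : M \to A \}_{\alpha \in \Omega}$ of linear maps is an $\mathcal{O}$-operator family if and only if the collection $\{ \widehat{T}_\alpha : A \oplus M \to A \oplus M \}_{\alpha \in \Omega}$, $\widehat{T}_\alpha(a,u)=(T_\alpha(u),0)$, is a Nijenhuis family on the semidirect product algebra $A \ltimes M$.
   Context: $\Omega$ is a semigroup. An $\mathcal{O}$-operator family is a collection of linear maps $T_\alpha:M\to A$ with $T_\alpha(u) \cdot T_\beta(v) = T_{\alpha\beta}(T_\alpha(u) \cdot v + u \cdot T_\beta(v))$ for all $u,v,\alpha,\beta$. A Nijenhuis family on an algebra $B$ is a collection of linear maps $N_\alpha:B\to B$ with $N_\alpha(x) N_\beta(y) = N_{\alpha \beta} ( N_\alpha (x) y + x N_\beta(y) - N_{\alpha \beta}(x y))$. $A\ltimes M$ is $A\oplus M$ with product $(a, u) \star (b, v) = (a \cdot b, a \cdot v + u \cdot b)$. *)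

From HB Require Import structures.
From mathcomp Require Import all_boot all_order all_algebra.
Set Implicit Arguments. Unset Strict Implicit. Unset Printing Implicit Defensive.
Import GRing.Theory.
Local Open Scope ring_scope.

Definition is_semigroup (Omega : Type) (op : Omega -> Omega -> Omega) :=
  forall a b c, op a (op b c) = op (op a b) c.

Definition is_assoc_algebra (R : fieldType) (A : lmodType R)
  (mulA : A -> A -> A) :=
  [/\ forall a, linear (mulA a),
      forall b, linear (fun a => mulA a b)
    & forall a b c, mulA a (mulA b c) = mulA (mulA a b) c].

Definition is_bimodule (R : fieldType) (A M : lmodType R)
  (mulA : A -> A -> A) (lact : A -> M -> M) (ract : M -> A -> M) :=
  ((forall a, linear (lact a)) /\ (forall u, linear (fun a => lact a u))) /\
  ((forall u, linear (ract u)) /\ (forall a, linear (fun u => ract u a))) /\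
  [/\ forall a b u, lact (mulA a b) u = lact a (lact b u),
      forall u a b, ract u (mulA a b) = ract (ract u a) b
    & forall a u b, lact a (ract u b) = ract (lact a u) b].

(* O-operator family (T_alpha linear is assumed separately). *)
Definition O_operator_family (Omega : Type) (op : Omega -> Omega -> Omega)
  (R : fieldType) (A M : lmodType R) (mulA : A -> A -> A)
  (lact : A -> M -> M) (ract : M -> A -> M) (T : Omega -> M -> A) :=
  forall (u v : M) (a b : Omega),
    mulA (T a u) (T b v) = T (op a b) (lact (T a u) v + ract u (T b v)).

Definition Nijenhuis_family (Omega : Type) (op : Omega -> Omega -> Omega)
  (R : fieldType) (B : lmodType R) (mulB : B -> B -> B) (N : Omega -> B -> B) :=
  (forall a, linear (N a)) /\
  forall (x y : B) (a b : Omega),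
    mulB (N a x) (N b y) =
    N (op a b) (mulB (N a x) y + mulB x (N b y) - N (op a b) (mulB x y)).

Definition semidirect_mul (R : fieldType) (A M : lmodType R)
  (mulA : A -> A -> A) (lact : A -> M -> M) (ract : M -> A -> M)
  (x y : (A * M)%type) : (A * M)%type :=
  (mulA x.1 y.1, lact x.1 y.2 + ract x.2 y.1).

Definition hatT (Omega : Type) (R : fieldType) (A M : lmodType R)
  (T : Omega -> M -> A) (a : Omega) (x : (A * M)%type) : (A * M)%type :=
  (T a x.2, 0).

(** The map [hatT_alpha] kills the [A]-component and has image in [A x 0],
    which is a subalgebra of [A ⋉ M] on which the product is the product of
    [A].  Expanding both sides of the Nijenhuis identity at [(a,u)], [(b,v)]
    therefore leaves, in the [A]-component, exactly the O-operator identity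
    at [u], [v]; all other terms vanish because the actions are linear. *)
From mathcomp Require Import all_boot all_order all_algebra.
Set Implicit Arguments. Unset Strict Implicit. Unset Printing Implicit Defensive.
Import GRing.Theory.
Local Open Scope ring_scope.

Lemma linear_fun0 (R : fieldType) (U V : lmodType R) (f : U -> V) :
  linear f -> f 0 = 0.
Proof. by move=> f_lin; have := f_lin (-1) 0 0; rewrite scaler0 addr0 scaleN1r addNr. Qed.

Lemma hatT_linear (Omega : Type) (R : fieldType) (A M : lmodType R)
    (T : Omega -> M -> A) (a : Omega) :
  linear (T a) -> linear (hatT T a).
Proof.
move=> Ta_lin k x y; rewrite /hatT /= Ta_lin.
by apply: injective_projections; rewrite /= ?scaler0 ?addr0.
Qed.

Section HatTNijenhuis.

Variables (Omega : Type) (op : Omega -> Omega -> Omega) (R : fieldType).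
Variables (A M : lmodType R) (mulA : A -> A -> A).
Variables (lact : A -> M -> M) (ract : M -> A -> M) (T : Omega -> M -> A).
Hypothesis lact0 : forall a, lact a 0 = 0.
Hypothesis ract0 : forall b, ract 0 b = 0.

Local Notation mulB := (semidirect_mul mulA lact ract).
Local Notation N := (hatT T).

Lemma semidirect_mul_hatT (x y : A * M) (a b : Omega) :
  mulB (N a x) (N b y) = (mulA (T a x.2) (T b y.2), 0).
Proof. by rewrite /semidirect_mul /= lact0 ract0 addr0. Qed.

Lemma hatT_Nijenhuis_argE (x y : A * M) (a b c : Omega) :
  N c (mulB (N a x) y + mulB x (N b y) - N c (mulB x y)) =
  (T c (lact (T a x.2) y.2 + ract x.2 (T b y.2)), 0).
Proof. by rewrite /hatT /semidirect_mul /= ract0 lact0 addr0 add0r subr0. Qed.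

Lemma hatT_Nijenhuis_identityP (x y : A * M) (a b : Omega) :
  mulB (N a x) (N b y) =
    N (op a b) (mulB (N a x) y + mulB x (N b y) - N (op a b) (mulB x y)) <->
  mulA (T a x.2) (T b y.2) =
    T (op a b) (lact (T a x.2) y.2 + ract x.2 (T b y.2)).
Proof.
rewrite semidirect_mul_hatT hatT_Nijenhuis_argE.
by split=> [[]|->].
Qed.

End HatTNijenhuis.

Theorem proposition2p11 (Omega : Type) (op : Omega -> Omega -> Omega)
  (R : fieldType) (A M : lmodType R)
  (mulA : A -> A -> A) (lact : A -> M -> M) (ract : M -> A -> M)
  (T : Omega -> M -> A) :
  is_semigroup op ->
  is_assoc_algebra mulA ->
  is_bimodule mulA lact ract ->
  (forall a, linear (T a)) ->
  (O_operator_family op mulA lact ract T <->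
   Nijenhuis_family op (semidirect_mul mulA lact ract) (hatT T)).
Proof.
move=> _ _ [[lact_lin _] [[_ ract_lin] _]] T_lin.
have lact0 a : lact a 0 = 0 by exact: linear_fun0.
have ract0 b : ract 0 b = 0 by exact: (linear_fun0 (ract_lin b)).
split=> [O_T | [_ N_T] u v a b].
- split=> [a|x y a b]; first exact: hatT_linear.
  exact/(hatT_Nijenhuis_identityP op mulA T lact0 ract0)/O_T.
- exact/(hatT_Nijenhuis_identityP op mulA T lact0 ract0 (0, u) (0, v))/N_T.
Qed.
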